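(* Let $i,j\ge 1$ be integers with $i+j\ge 16$, and let $m=i+j+2(i+j)^{3/4}$. Let $S'$ be a set of $m$ distinct elements of a totally ordered universe, where the rank of an element of $S'$ is its position in increasing order ($1$ for the smallest, $m$ for the largest). Let $R$ be a multiset of $m^{3/4}$ elements of $S'$ drawn uniformly and independently at random with replacement, and let $k=j\,m^{-1/4}+m^{1/2}/2$. Let $E_1$ be the event that at least $k$ of the samples in $R$ (counted with multiplicity) have rank at most $j$ in $S'$, and let $E_2$ be the event that at least $m^{3/4}-k$ of the samples in $R$ (counted with multiplicity) have rank at least $m-i+1$ in $S'$. Then ${\rm Prob}(E_1)\le m^{-1/4}$ and ${\rm Prob}(E_2)\le m^{-1/4}$.
   Context: Quantities such as $m^{3/4}$, $m^{1/2}/2$ and $j\,m^{-1/4}$ are treated as integers (floors/ceilings omitted). *)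

From mathcomp Require Import all_boot all_order all_algebra.
From mathcomp Require Import all_classical all_reals all_analysis.
Unset Printing Implicit Defensive.
Import Order.TTheory GRing.Theory Num.Theory.
Local Open Scope ring_scope.

(* Rounding convention (floors omitted in the paper): integer-valued
   quantities are rounded down. *)

Definition msize (R : realType) (i j : nat) : nat :=
  (i + j + Num.truncn (2 * ((i + j)%:R : R) `^ (3 / 4)))%N.

Definition ssize (R : realType) (m : nat) : nat :=
  Num.truncn ((m%:R : R) `^ (3 / 4)).

Definition kthr (R : realType) (j m : nat) : R :=
  (j%:R * (m%:R `^ (- (1 / 4)))) + (m%:R `^ (1 / 2)) / 2.

(* S' is identified with its ranks: element r : 'I_m has rank r+1.
   A sample R is a function 'I_s -> 'I_m (s draws with replacement),
   drawn uniformly among the m^s possibilities. *)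
Definition prob_unif (R : realType) (s m : nat) (E : pred {ffun 'I_s -> 'I_m}) : R :=
  #|[set f : {ffun 'I_s -> 'I_m} | E f]|%:R / (#|{ffun 'I_s -> 'I_m}|)%:R.

Definition cnt_low {s m : nat} (j : nat) (f : {ffun 'I_s -> 'I_m}) : nat :=
  #|[set t : 'I_s | (f t).+1 <= j]%N|.

Definition cnt_high {s m : nat} (i : nat) (f : {ffun 'I_s -> 'I_m}) : nat :=
  #|[set t : 'I_s | (m - i + 1 <= (f t).+1)%N]|.

Definition E1 (R : realType) (i j : nat) : pred {ffun 'I_(ssize R (msize R i j)) -> 'I_(msize R i j)} :=
  fun f => kthr R j (msize R i j) <= (cnt_low j f)%:R.

Definition E2 (R : realType) (i j : nat) : pred {ffun 'I_(ssize R (msize R i j)) -> 'I_(msize R i j)} :=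
  fun f => (ssize R (msize R i j))%:R - kthr R j (msize R i j) <= (cnt_high i f)%:R.

From mathcomp Require Import all_boot all_order all_algebra.
From mathcomp Require Import all_classical all_reals all_analysis.
From mathcomp Require Import ring lra zify.
Import Order.TTheory GRing.Theory Num.Theory.
Local Open Scope ring_scope.

(* Write y = m^{1/4}, so that m = y^4, the sample size s is at most y^3 and
   k = j/y + y^2/2.  The number of samples falling into a fixed set of c ranks
   has mean s c/m and, by an exact second-moment computation over all m^s
   samples, variance at most s/4; Chebyshev then bounds the probability of a
   deviation y^2/2 by s/y^4 <= 1/y.  For E1 the mean s j/m <= j/y lies y^2/2
   below k.  For E2 one counts the complementary ranks <= m - i, whose mean
   s (m - i)/m lies y^2/2 above k as soon as y^3 + (i + j) <= y s.  This last
   inequality between the rounded quantities is proved by hand for i + j >= 21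
   and by explicit numerical brackets for 16 <= i + j <= 20. *)

Section SecondMoment.
Variables (R : comPzRingType) (I T : finType).

Lemma sum_ffun_coord (F : T -> R) (t0 : I) :
  \sum_(f : {ffun I -> T}) F (f t0) = #|T|%:R ^+ #|I|.-1 * \sum_x F x.
Proof.
pose H t x := if t == t0 then F x else 1.
transitivity (\sum_(f : {ffun I -> T}) \prod_t H t (f t)).
  apply: eq_bigr => f _; rewrite (bigD1 t0) //= /H eqxx big1 ?mulr1 //.
  by move=> t /negbTE ->.
rewrite -bigA_distr_bigA (bigD1 t0) //= /H eqxx mulrC; congr (_ * _).
rewrite (eq_bigr (fun _ => #|T|%:R)); last by move=> t /negbTE ->; rewrite sumr_const.
by rewrite prodr_const cardC1.
Qed.

Lemma sum_ffun_coord_mul_eq0 (F G : T -> R) (t0 u0 : I) :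
  t0 != u0 -> \sum_x G x = 0 -> \sum_(f : {ffun I -> T}) F (f t0) * G (f u0) = 0.
Proof.
move=> t0u0 G0.
pose H t x := if t == t0 then F x else if t == u0 then G x else 1.
transitivity (\sum_(f : {ffun I -> T}) \prod_t H t (f t)).
  apply: eq_bigr => f _; rewrite (bigD1 t0) //= (bigD1 u0) 1?eq_sym //=.
  rewrite /H eqxx eq_sym (negbTE t0u0) eqxx big1 ?mulr1 //.
  by move=> t /andP [/negbTE -> /negbTE ->].
by rewrite -bigA_distr_bigA (bigD1 u0) //= /H eq_sym (negbTE t0u0) eqxx G0 mul0r.
Qed.

Lemma sum_ffun_sqr_sum (g : T -> R) : \sum_x g x = 0 ->
  \sum_(f : {ffun I -> T}) (\sum_t g (f t)) ^+ 2
    = #|I|%:R * #|T|%:R ^+ #|I|.-1 * \sum_x g x ^+ 2.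
Proof.
move=> g0.
under eq_bigr do rewrite expr2 mulr_suml; rewrite exchange_big /=.
rewrite (eq_bigr (fun _ => #|T|%:R ^+ #|I|.-1 * \sum_x g x ^+ 2)).
  by rewrite sumr_const -(mulr_natl (_ * _)) mulrA.
move=> t _; under eq_bigr do rewrite mulr_sumr; rewrite exchange_big /= (bigD1 t) //=.
rewrite [X in _ + X]big1 ?addr0 => [|u ut]; last first.
  by apply: sum_ffun_coord_mul_eq0; rewrite // eq_sym.
by rewrite -(sum_ffun_coord (fun x => g x ^+ 2) t); under [RHS]eq_bigr do rewrite expr2.
Qed.

End SecondMoment.

Section IndicatorVariance.
Variables (R : realFieldType) (T : finType) (A : pred T).

Lemma natr_card_sum : #|A|%:R = \sum_x ((x \in A)%:R : R).
Proof.
by rewrite -sum1_card natr_sum big_mkcond; apply: eq_bigr => x _; case: (x \in A).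
Qed.

Let a : R := #|A|%:R.
Let N : R := #|T|%:R.

Let sumr_constT (c : R) : \sum_(x : T) c = c * N.
Proof. by rewrite sumr_const -mulr_natr. Qed.

Let card_le_cardT : a <= N.
Proof. by rewrite ler_nat max_card. Qed.

Lemma sum_indicator_centered : \sum_x ((x \in A)%:R - a / N) = 0.
Proof.
rewrite sumrB -natr_card_sum -/a sumr_constT.
have [N0|N_gt0] := eqVneq N 0.
  by move: card_le_cardT; rewrite N0 mulr0 subr0 => a0; apply/eqP; rewrite eq_le a0 ler0n.
by rewrite mulfVK ?subrr.
Qed.

Lemma sum_indicator_centered_sqr_le :
  \sum_x ((x \in A)%:R - a / N) ^+ 2 <= N / 4.
Proof.
rewrite (eq_bigr (fun x => (x \in A)%:R * (1 - 2 * (a / N)) + (a / N) ^+ 2)); last first.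
  by move=> x _; case: (x \in A) => /=; ring.
rewrite big_split /= -mulr_suml -natr_card_sum -/a sumr_constT.
have := card_le_cardT; have [-> a0|N0 aN] := eqVneq N 0.
  by rewrite invr0; lra.
have N_gt0 : 0 < N by rewrite lt_def N0 ler0n.
have -> : a * (1 - 2 * (a / N)) + (a / N) ^+ 2 * N = N / 4 - (N - 2 * a) ^+ 2 / (4 * N).
  by field.
by rewrite gerBl divr_ge0 ?sqr_ge0 // ltW // mulr_gt0.
Qed.

End IndicatorVariance.

Section UniformSampling.
Variables (R : realType) (s m : nat).

Lemma natr_card_set_ffun_in (A : pred 'I_m) (f : {ffun 'I_s -> 'I_m}) :
  #|[set u | f u \in A]|%:R = \sum_u ((f u \in A)%:R : R).
Proof. by rewrite natr_card_sum; apply: eq_bigr => u _; rewrite inE. Qed.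

Lemma prob_unif_dev_le (A : pred 'I_m) (E : pred {ffun 'I_s -> 'I_m}) (t : R) :
  0 < t ->
  (forall f, E f -> t <= `|#|[set u | f u \in A]|%:R - s%:R * #|A|%:R / m%:R|) ->
  prob_unif R s m E <= s%:R / (4 * t ^+ 2).
Proof.
move=> t_gt0 E_dev.
pose g x : R := (x \in A)%:R - #|A|%:R / m%:R.
have dev_sum (f : {ffun 'I_s -> 'I_m}) :
    #|[set u | f u \in A]|%:R - s%:R * #|A|%:R / m%:R = \sum_u g (f u).
  by rewrite /g sumrB natr_card_set_ffun_in sumr_const card_ord mulr_natl mulrnAl.
have card_E : #|[set f | E f]|%:R * t ^+ 2 <= s%:R * m%:R ^+ s.-1 * (m%:R / 4).
  apply: (@le_trans _ _ (\sum_(f : {ffun 'I_s -> 'I_m}) (\sum_u g (f u)) ^+ 2)).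
    rewrite natr_card_sum mulr_suml; apply: ler_sum => f _; rewrite inE.
    case: (boolP (E f)) => [Ef|_]; last by rewrite mul0r sqr_ge0.
    rewrite mul1r -dev_sum -[X in _ <= X]real_normK ?num_real //.
    by apply: lerXn2r; rewrite ?nnegrE ?normr_ge0 ?(ltW t_gt0) ?E_dev.
  rewrite sum_ffun_sqr_sum ?card_ord; last first.
    by have := @sum_indicator_centered R _ A; rewrite card_ord.
  rewrite ler_wpM2l //.
  by have := @sum_indicator_centered_sqr_le R _ A; rewrite card_ord.
rewrite /prob_unif card_ffun !card_ord natrX.
have [->|ms_neq0] := eqVneq ((m%:R : R) ^+ s) 0.
  by rewrite invr0 mulr0 divr_ge0 ?ler0n // mulr_ge0 ?sqr_ge0.
have ms_gt0 : 0 < (m%:R : R) ^+ s by rewrite lt_def ms_neq0 exprn_ge0.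
rewrite ler_pdivrMr // mulrAC ler_pdivlMr ?mulr_gt0 ?exprn_gt0 //.
have -> : s%:R * m%:R ^+ s = 4 * (s%:R * m%:R ^+ s.-1 * (m%:R / 4)) :> R.
  by case: (s) => [|k] /=; rewrite ?mul0r ?mulr0 // exprS; field.
lra.
Qed.

End UniformSampling.

Lemma card_ord_lt (n c : nat) : (c <= n)%N -> #|[pred r : 'I_n | (r < c)%N]| = c.
Proof.
move=> cn; rewrite -sum1_card (eq_bigl (fun r : 'I_n => (r < c)%N)) //.
by rewrite -(big_ord_widen _ (fun _ => 1%N) cn) sum1_card card_ord.
Qed.

Lemma cnt_high_add_cnt_low (s m i : nat) (f : {ffun 'I_s -> 'I_m}) :
  (cnt_high i f + cnt_low (m - i) f)%N = s.
Proof.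
rewrite -[RHS](card_ord s) -(cardsC [set t | (m - i + 1 <= (f t).+1)%N]).
by congr (_ + _); apply: eq_card => t; rewrite !inE addn1 ltnS -ltnNge.
Qed.

Section LargeDeviation.
Context {R : realType} {s m : nat} {y : R}.
Hypotheses (y_gt0 : 0 < y) (m_y : m%:R = y ^+ 4) (s_le : s%:R <= y ^+ 3).

Lemma prob_cnt_low_dev (c : nat) (E : pred {ffun 'I_s -> 'I_m}) : (c <= m)%N ->
  (forall f, E f -> y ^+ 2 / 2 <= `|(cnt_low c f)%:R - s%:R * c%:R / m%:R|) ->
  prob_unif R s m E <= y^-1.
Proof.
move=> cm E_dev.
have dev_gt0 : 0 < y ^+ 2 / 2 by rewrite divr_gt0 ?exprn_gt0.
apply: le_trans (@prob_unif_dev_le R s m [pred r : 'I_m | (r < c)%N] E _ dev_gt0 _) _.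
  by move=> f /E_dev; rewrite card_ord_lt.
rewrite ler_pdivrMr ?mulr_gt0 ?exprn_gt0 //.
by have -> : y^-1 * (4 * (y ^+ 2 / 2) ^+ 2) = y ^+ 3 by field; rewrite gt_eqF.
Qed.

Lemma prob_cnt_low_le (j : nat) (k : R) : (j <= m)%N ->
  j%:R / y + y ^+ 2 / 2 <= k ->
  prob_unif R s m (fun f => k <= (cnt_low j f)%:R) <= y^-1.
Proof.
move=> jm jk; apply: prob_cnt_low_dev jm _ => f /= kf.
have mean_le : s%:R * j%:R / m%:R <= j%:R / y.
  rewrite m_y ler_pdivrMr ?exprn_gt0 //.
  have -> : j%:R / y * y ^+ 4 = j%:R * y ^+ 3 by field; rewrite gt_eqF.
  by rewrite mulrC ler_wpM2l.
by apply: le_trans (ler_norm _); lra.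
Qed.

Lemma prob_cnt_high_le (i j : nat) (k : R) : (i <= m)%N ->
  y ^+ 3 + (i + j)%:R <= y * s%:R -> k <= j%:R / y + y ^+ 2 / 2 ->
  prob_unif R s m (fun f => s%:R - k <= (cnt_high i f)%:R) <= y^-1.
Proof.
move=> im margin kj; apply: (@prob_cnt_low_dev (m - i)) => [|f /= kf].
  exact: leq_subr.
have cnt_f : (cnt_high i f)%:R + (cnt_low (m - i) f)%:R = s%:R :> R.
  by rewrite -natrD cnt_high_add_cnt_low.
have mean_ge : j%:R / y + y ^+ 2 <= s%:R * (m - i)%:R / m%:R.
  rewrite natrB // m_y ler_pdivlMr ?exprn_gt0 //.
  have -> : (j%:R / y + y ^+ 2) * y ^+ 4 = j%:R * y ^+ 3 + y ^+ 6.
    by field; rewrite gt_eqF.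
  have h1 : y ^+ 3 * (y ^+ 3 + (i + j)%:R) <= y ^+ 3 * (y * s%:R).
    by rewrite ler_wpM2l // exprn_ge0 // ltW.
  have h2 : i%:R * s%:R <= i%:R * y ^+ 3 :> R by rewrite ler_wpM2l.
  rewrite natrD in h1; nra.
by rewrite ler_normr; apply/orP; right; lra.
Qed.

End LargeDeviation.

Section RootArithmetic.
Context {R : realType}.

Lemma powR_root4_expn (a : R) (k : nat) : 0 <= a -> (a `^ (1/4)) ^+ k = a `^ (k%:R / 4).
Proof.
by move=> a_ge0; rewrite -powR_mulrn ?powR_ge0 // -powRrM; congr (_ `^ _); ring.
Qed.

Lemma powR_root4_exp4 (a : R) : 0 <= a -> (a `^ (1/4)) ^+ 4 = a.
Proof. by move=> a_ge0; rewrite powR_root4_expn // divff ?powRr1 // pnatr_eq0. Qed.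

Lemma truncn_expn_itv (x : R) (e : nat) : (0 < e)%N -> 0 <= x ->
  (Num.truncn x)%:R ^+ e <= x ^+ e /\ x ^+ e < ((Num.truncn x)%:R + 1) ^+ e.
Proof.
move=> e_gt0 x_ge0; have /andP[lo hi] := truncn_itv x_ge0.
rewrite -natr1 in hi.
by rewrite ler_pXn2r ?ltr_pXn2r ?nnegrE ?addr_ge0.
Qed.

Lemma natr_eq_of_expn_itv (e k l : nat) (v : R) : (0 < e)%N ->
  k%:R ^+ e <= v -> v < (k%:R + 1) ^+ e ->
  l%:R ^+ e <= v -> v < (l%:R + 1) ^+ e -> k = l.
Proof.
move=> e_gt0 kv vk lv vl.
have le_of_itv a b : a%:R ^+ e <= v -> v < (b%:R + 1) ^+ e -> (a <= b)%N.
  move=> av vb; rewrite -ltnS -(ltr_nat R) -natr1 -(ltr_pXn2r e_gt0) ?nnegrE //.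
  exact: le_lt_trans av vb.
by apply/eqP; rewrite eqn_leq !le_of_itv.
Qed.

Lemma root4_poly_ge (y : R) : 5/2 <= y ->
  (y ^+ 3 + y + 1) ^+ 4 <= 16 * (y ^+ 4 - y ^+ 3 - y) ^+ 3.
Proof.
move=> y_ge; set z := y - 5/2.
have z_ge0 : 0 <= z by rewrite /z; lra.
have -> : y = 5/2 + z by rewrite /z; ring.
nra.
Qed.

Lemma root4_margin_large (n d s : nat) (y : R) : (21 <= n)%N ->
  16 * n%:R ^+ 3 < (d%:R + 1) ^+ 4 :> R -> 0 <= y -> y ^+ 4 = n%:R + d%:R ->
  y ^+ 3 < s%:R + 1 -> y ^+ 3 + n%:R <= y * s%:R.
Proof.
move=> n_ge d_gt y_ge0 y4 y3_lt.
have n_ge' : 21 <= n%:R :> R by rewrite (ler_nat R 21).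
have d_ge : 19 <= d%:R :> R.
  rewrite natr1 in d_gt; rewrite (ler_nat R 19) -ltnS -(ltr_nat R).
  rewrite -(ltr_pXn2r (_ : 0 < 4)%N) ?nnegrE //.
  apply: (le_lt_trans _ d_gt); suff : 21 ^+ 3 <= n%:R ^+ 3 :> R by lra.
  by rewrite lerXn2r ?nnegrE.
have y_ge : 5/2 <= y.
  by rewrite -(ler_pXn2r (_ : 0 < 4)%N) ?nnegrE ?y4 //; lra.
suff d_ge_y : y ^+ 3 + y <= d%:R.
  have : 0 <= y * (s%:R + 1 - y ^+ 3) by rewrite mulr_ge0 // subr_ge0 ltW.
  have -> : y * (s%:R + 1 - y ^+ 3) = y * s%:R + y - y ^+ 4 by ring.
  by rewrite y4; lra.
(* Otherwise n > y^4 - y^3 - y, against (d + 1)^4 > 16 n^3 and root4_poly_ge. *)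
rewrite leNgt; apply/negP => d_lt.
set w := y ^+ 4 - y ^+ 3 - y.
have w_ge0 : 0 <= w.
  have -> : w = y * (y ^+ 2 * (y - 1) - 1) by rewrite /w; ring.
  by rewrite mulr_ge0 //; nra.
have w_lt : w < n%:R by rewrite /w y4; lra.
have w3_lt : w ^+ 3 < n%:R ^+ 3 by rewrite ltrXn2r.
have d_lt4 : (d%:R + 1) ^+ 4 < (y ^+ 3 + y + 1) ^+ 4.
  by rewrite ltrXn2r ?nnegrE ?addr_ge0 //; lra.
by have := root4_poly_ge _ y_ge; rewrite -/w; lra.
Qed.

Lemma root4_margin_bracket (n s s0 : nat) (a b y : R) : 0 <= a -> 0 <= b ->
  a ^+ 4 <= y ^+ 4 -> y ^+ 4 <= b ^+ 4 -> s0%:R ^+ 4 <= (y ^+ 4) ^+ 3 ->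
  b ^+ 3 + n%:R <= a * s0%:R -> 0 <= y -> y ^+ 3 < s%:R + 1 ->
  y ^+ 3 + n%:R <= y * s%:R.
Proof.
move=> a_ge0 b_ge0 ay yb s0y ab y_ge0 y3_lt.
have a_le : a <= y by rewrite -(ler_pXn2r (_ : 0 < 4)%N) ?nnegrE.
have y_le : y <= b by rewrite -(ler_pXn2r (_ : 0 < 4)%N) ?nnegrE.
have s0_le : s0%:R <= y ^+ 3.
  by rewrite -(ler_pXn2r (_ : 0 < 4)%N) ?nnegrE ?exprn_ge0 // -exprM mulnC exprM.
have s0_s : s0%:R <= s%:R :> R.
  rewrite ler_nat -ltnS -(ltr_nat R) -natr1; exact: le_lt_trans s0_le y3_lt.
have y3_le : y ^+ 3 <= b ^+ 3 by rewrite lerXn2r ?nnegrE.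
have as0 : a * s0%:R <= y * s0%:R by rewrite ler_wpM2r.
have ys0 : y * s0%:R <= y * s%:R by rewrite ler_wpM2l.
lra.
Qed.

Lemma root4_margin (n d s : nat) (y : R) : (16 <= n)%N ->
  d%:R ^+ 4 <= 16 * n%:R ^+ 3 :> R -> 16 * n%:R ^+ 3 < (d%:R + 1) ^+ 4 :> R ->
  0 <= y -> y ^+ 4 = n%:R + d%:R -> y ^+ 3 < s%:R + 1 ->
  y ^+ 3 + n%:R <= y * s%:R.
Proof.
move=> n_ge d_le d_gt y_ge0 y4 y3_lt.
have [n_ge21|n_lt21] := leqP 21 n; first exact: root4_margin_large d_gt y_ge0 y4 y3_lt.
have from_bracket d0 s0 (a b : R) :
    d0%:R ^+ 4 <= 16 * n%:R ^+ 3 :> R -> 16 * n%:R ^+ 3 < (d0%:R + 1) ^+ 4 :> R ->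
    0 <= a -> 0 <= b -> a ^+ 4 <= n%:R + d0%:R -> n%:R + d0%:R <= b ^+ 4 ->
    s0%:R ^+ 4 <= (n%:R + d0%:R) ^+ 3 :> R -> b ^+ 3 + n%:R <= a * s0%:R ->
    y ^+ 3 + n%:R <= y * s%:R.
  move=> d0_le d0_gt a_ge0 b_ge0 an bn s0n ab.
  have d_d0 : d = d0 by apply: (@natr_eq_of_expn_itv 4 d d0 (16 * n%:R ^+ 3)).
  rewrite -{}d_d0 in an bn s0n.
  by apply: (@root4_margin_bracket n s s0 a b y a_ge0 b_ge0); rewrite ?y4.
(* d0 and s0 are the values of d and s for n = 16, ..., 20, and a <= y <= b. *)
have : n = 16%N \/ n = 17%N \/ n = 18%N \/ n = 19%N \/ n = 20%N by lia.
case=> [|[|[|[|]]]] n_eq; subst n.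
- by apply: (from_bracket 16 13 (237/100) (238/100)); lra.
- by apply: (from_bracket 16 13 (239/100) (240/100)); lra.
- by apply: (from_bracket 17 14 (243/100) (244/100)); lra.
- by apply: (from_bracket 18 15 (246/100) (247/100)); lra.
- by apply: (from_bracket 18 15 (248/100) (249/100)); lra.
Qed.

End RootArithmetic.

Theorem lemma1 (R : realType) (i j : nat) :
  (1 <= i)%N -> (1 <= j)%N -> (16 <= i + j)%N ->
  prob_unif R _ _ (E1 R i j) <= ((msize R i j)%:R : R) `^ (- (1 / 4)) /\
  prob_unif R _ _ (E2 R i j) <= ((msize R i j)%:R : R) `^ (- (1 / 4)).
Proof.
move=> _ _ n_ge; set n := (i + j)%N in n_ge.
set d := Num.truncn (2 * (n%:R : R) `^ (3 / 4)).
set m := msize R i j; have m_nd : m = (n + d)%N by [].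
set s := ssize R m; pose y : R := m%:R `^ (1 / 4).
have m_ge0 : (0 : R) <= m%:R := ler0n _ _.
have y_gt0 : 0 < y by rewrite powR_gt0 // ltr0n m_nd ltn_addr // (leq_trans _ n_ge).
have m_y : m%:R = y ^+ 4 by rewrite powR_root4_exp4.
have [s_le y3_lt] : s%:R <= y ^+ 3 /\ y ^+ 3 < s%:R + 1.
  rewrite natr1 /y powR_root4_expn //; apply/andP; apply: truncn_itv; exact: powR_ge0.
have [d_le d_gt] :
    d%:R ^+ 4 <= 16 * n%:R ^+ 3 :> R /\ 16 * n%:R ^+ 3 < (d%:R + 1) ^+ 4 :> R.
  have n34 : (2 * (n%:R : R) `^ (3 / 4)) ^+ 4 = 16 * n%:R ^+ 3.
    rewrite -powR_root4_expn ?ler0n // exprMn -exprM mulnC exprM.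
    by rewrite powR_root4_exp4 ?ler0n //; ring.
  by rewrite -n34; apply: truncn_expn_itv; rewrite ?mulr_ge0 ?powR_ge0.
have margin : y ^+ 3 + n%:R <= y * s%:R.
  apply: (@root4_margin _ n d s y n_ge d_le d_gt (ltW y_gt0) _ y3_lt).
  by rewrite -m_y m_nd natrD.
have k_eq : kthr R j m = j%:R / y + y ^+ 2 / 2.
  have half : 1 / 2 = 2%:R / 4 :> R by field.
  by rewrite /kthr powRN half -(powR_root4_expn _ 2).
rewrite powRN -/y; split.
- apply: (prob_cnt_low_le y_gt0 m_y s_le); last by rewrite k_eq.
  by rewrite m_nd /n addnAC leq_addl.
- apply: (prob_cnt_high_le y_gt0 m_y s_le i j _ _ margin); last by rewrite k_eq.
  by rewrite m_nd /n -addnA leq_addr.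
Qed.
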